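(* Let $p$ be a prime, $n\ge 1$, and let $F\otimes_{ku_*}ku_*(\mathbb{Z}_{p^n})$ and the elements $[a,b]$ be as described in the context. For every integer $k\ge 0$, every integer $a$ and every integer $b$ with $1\le b\le (k+1)g_1$, where $g_1=p-1$, one has $$p^{n+k}[a,b]=0 \quad\text{in } F\otimes_{ku_*}ku_*(\mathbb{Z}_{p^n}).$$
   Context: Fix a prime $p$. Let $ku_*=\mathbb{Z}_{(p)}[v]$ be the $p$-local coefficient ring of connective complex $K$-theory, $v$ of degree $2$. Write $g_i=p^i-1$. For $m\ge1$ and $0\le t\le p^m-1$ put $a_{t,m}=\binom{p^m}{t+1}v^t\in ku_*$ (the coefficients of the $[p^m]$-series $[p^m](x)=\sum_t a_{t,m}x^{t+1}$). The reduced homology $ku_*(\mathbb{Z}_{p^n})$ (of $B\mathbb{Z}/p^n$) is the $ku_*$-module generated by classes $e_j$, $j\ge1$, subject to the relations $\sum_{t=0}^{p^n-1}a_{t,n}e_{j-t}=0$ for all $j\ge1$, where $e_h=0$ for $h\le 0$. Let $F=\bigoplus_{i\ge1}ku_*\alpha_i$ be the free $ku_*$-module on generators $\alpha_i$, with $\alpha_h=0$ for $h\le0$. For integers $i,j$ write $[i,j]=\alpha_i\otimes e_j\in F\otimes_{ku_*}ku_*(\mathbb{Z}_{p^n})$ (so $[i,j]=0$ if $i\le0$ or $j\le0$), and $c[i,j]=c\,\alpha_i\otimes e_j$ for $c\in ku_*$. *)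

From mathcomp Require Import all_boot all_algebra.
Import GRing.Theory Num.Theory.
Set Implicit Arguments. Unset Strict Implicit. Unset Printing Implicit Defensive.
Local Open Scope ring_scope.

(* ku_* = Z_(p)[v] is modelled as the subring of {poly rat} ('X = v) of
   polynomials all of whose coefficients lie in Z_(p) (denominator prime to p). *)
Definition zloc (p : nat) (q : rat) : bool := ~~ (p %| `|denq q|)%N.
Definition in_ku (p : nat) (P : {poly rat}) : bool := all (zloc p) P.

Definition acoef (p m t : nat) : {poly rat} := ('C(p ^ m, t.+1))%:R *: 'X^t.

(* Elements of the free ku_*-module on the symbols alpha_i (x) e_j, i,j integers,
   given by their coefficient function.  gen c i j = c[i,j], which is 0 unless
   i >= 1 and j >= 1. *)
Definition elt := int -> int -> {poly rat}.
Definition gen (c : {poly rat}) (i j : int) : elt :=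
  fun x y => if [&& x == i, y == j, 0 < i & 0 < j] then c else 0.

(* c * (alpha_i (x) relation_j) = sum_{t=0}^{p^n-1} c a_{t,n} [i, j-t] *)
Definition rel (p n : nat) (c : {poly rat}) (i j : int) : elt :=
  fun x y => \sum_(t < p ^ n) gen (c * acoef p n t) i (j - t%:Z) x y.

(* F (x)_{ku_*} ku_*(Z_{p^n}) is the quotient of the free module on the [i,j]
   (i,j >= 1) by the ku_*-submodule generated by the alpha_i (x) relation_j.
   [tensor_zero p n z] : z lies in that submodule, i.e. z = 0 in the tensor product. *)
Definition tensor_zero (p n : nat) (z : elt) : Prop :=
  exists s : seq (int * int * {poly rat}),
    all (fun r => in_ku p r.2) s /\
    forall x y, z x y = \sum_(r <- s) rel p n r.2 r.1.1 r.1.2 x y.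

From Pilot Require Import Defs.
From mathcomp Require Import all_boot all_order all_algebra.
From mathcomp Require Import zify ring.
Import Order.TTheory GRing.Theory Num.Theory.
Set Implicit Arguments. Unset Strict Implicit. Unset Printing Implicit Defensive.
Local Open Scope ring_scope.

(* Strong induction on b.  Multiplying the relation at e_b by p^k isolates its
   leading term p^(n+k)[a,b]; every other term is a multiple of
   binom(p^n, s) p^k [a, b-s+1] with s >= 2.  Since p^n divides
   binom(p^n, s) p^(v_p(s)) in Z_(p), that term equals a Z_(p)[v]-multiple of
   p^(n+k-v_p(s)) [a, b-s+1], and b-s+1 <= (k - v_p(s) + 1)(p-1) because
   v (p-1) < p^v <= s.  So the induction hypothesis kills it. *)

Section Zlocal.

Variable p : nat.
Hypothesis p_prime : prime p.

Lemma zloc_int (m : int) : zloc p m%:~R.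
Proof. by rewrite /zloc denq_int dvdn1 neq_ltn prime_gt1 ?orbT. Qed.

Lemma zloc_nat (m : nat) : zloc p m%:R.
Proof. exact: (zloc_int m). Qed.

Lemma zloc0 : zloc p 0.
Proof. exact: (zloc_nat 0). Qed.

Lemma zlocN (x : rat) : zloc p (- x) = zloc p x.
Proof. by rewrite /zloc denqN. Qed.

Lemma zloc_frac (m d : int) : ~~ (p %| `|d|)%N -> zloc p (m%:~R / d%:~R).
Proof.
apply: contra; case: divqP => [_ | k x _ p_dvd_den]; first by rewrite dvdn0.
by rewrite abszM dvdn_mull.
Qed.

Lemma zlocM (x y : rat) : zloc p x -> zloc p y -> zloc p (x * y).
Proof.
move=> zx zy; rewrite -(divq_num_den x) -(divq_num_den y) mulf_div -!rmorphM.
by apply: zloc_frac; rewrite abszM Euclid_dvdM // negb_or; apply/andP.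
Qed.

Lemma in_kuP (P : {poly rat}) : reflect (forall i, zloc p P`_i) (in_ku p P).
Proof.
apply: (iffP (all_nthP 0)) => [zP i | zP i _]; last exact: zP.
by have [/zP // | i_ge] := ltnP i (size P); rewrite nth_default // zloc0.
Qed.

Lemma in_ku1 : in_ku p 1.
Proof. by apply/in_kuP => i; rewrite coefC; case: ifP => _; rewrite ?zloc0 ?(zloc_nat 1). Qed.

Lemma in_kuN (c : {poly rat}) : in_ku p (- c) = in_ku p c.
Proof.
by apply/in_kuP/in_kuP => zc i; [rewrite -zlocN -coefN | rewrite coefN zlocN].
Qed.

Lemma in_kuMn (d : {poly rat}) (e : nat) : in_ku p d -> in_ku p (d * e%:R).
Proof.
move/in_kuP => zd; apply/in_kuP => i.
by rewrite mulr_natr coefMn -mulr_natr zlocM ?zloc_nat.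
Qed.

Lemma in_kuMZX (d : {poly rat}) (u : rat) (t : nat) :
  in_ku p d -> zloc p u -> in_ku p (d * (u *: 'X^t)).
Proof.
move/in_kuP => zd zu; apply/in_kuP => i.
rewrite -scalerAr coefZ coefMXn zlocM //.
by case: ifP => _; [exact: zloc0 | exact: zd].
Qed.

End Zlocal.

Lemma gen_nonpos (c : {poly rat}) (i j x y : int) : j <= 0 -> gen c i j x y = 0.
Proof. by move=> j_le0; rewrite /gen; case: ifP => // /and4P [_ _ _ /lt_le_trans/(_ j_le0)]. Qed.

Section TensorZero.

Variables p n : nat.
Hypothesis p_prime : prime p.

Lemma tensor_zero_ext (z1 z2 : elt) :
  (forall x y, z1 x y = z2 x y) -> tensor_zero p n z1 -> tensor_zero p n z2.
Proof. by move=> z12 [s [s_ku z1E]]; exists s; split => // x y; rewrite -z12. Qed.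

Lemma tensor_zero0 : tensor_zero p n (fun _ _ => 0).
Proof. by exists [::]; split => // x y; rewrite big_nil. Qed.

Lemma tensor_zero_gen0 (c : {poly rat}) (i j : int) : j <= 0 -> tensor_zero p n (gen c i j).
Proof. by move=> j_le0; apply: tensor_zero_ext tensor_zero0 => x y; rewrite gen_nonpos. Qed.

Lemma tensor_zeroD (z1 z2 : elt) : tensor_zero p n z1 -> tensor_zero p n z2 ->
  tensor_zero p n (fun x y => z1 x y + z2 x y).
Proof.
move=> [s1 [s1_ku z1E]] [s2 [s2_ku z2E]]; exists (s1 ++ s2).
by rewrite all_cat s1_ku s2_ku; split => // x y; rewrite big_cat z1E z2E.
Qed.

Lemma tensor_zeroN (z : elt) : tensor_zero p n z -> tensor_zero p n (fun x y => - z x y).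
Proof.
move=> [s [s_ku zE]]; exists [seq (r.1, - r.2) | r <- s]; split.
  by rewrite all_map; apply: sub_all s_ku => r /=; rewrite in_kuN.
move=> x y; rewrite zE big_map -sumrN; apply: eq_bigr => r _.
rewrite /Defs.rel -sumrN; apply: eq_bigr => t _.
by rewrite /gen; case: ifP; rewrite ?mulNr ?oppr0.
Qed.

Lemma tensor_zeroB (z1 z2 : elt) : tensor_zero p n z1 -> tensor_zero p n z2 ->
  tensor_zero p n (fun x y => z1 x y - z2 x y).
Proof. by move=> z1_0 /tensor_zeroN; apply: tensor_zeroD. Qed.

Lemma tensor_zero_rel (c : {poly rat}) (i j : int) :
  in_ku p c -> tensor_zero p n (Defs.rel p n c i j).
Proof. by move=> c_ku; exists [:: (i, j, c)]; rewrite /= c_ku; split => // x y; rewrite big_seq1. Qed.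

Lemma tensor_zero_sum (I : eqType) (r : seq I) (F : I -> elt) :
  (forall t, t \in r -> tensor_zero p n (F t)) ->
  tensor_zero p n (fun x y => \sum_(t <- r) F t x y).
Proof.
elim: r => [|t r IH] F0.
  by apply: tensor_zero_ext tensor_zero0 => x y; rewrite big_nil.
have sum_0 : tensor_zero p n (fun x y => \sum_(t <- r) F t x y).
  by apply: IH => t' t'_r; apply: F0; rewrite inE t'_r orbT.
apply: tensor_zero_ext (tensor_zeroD (F0 t (mem_head t r)) sum_0) => x y.
by rewrite big_cons.
Qed.

Lemma rel_lead_tail (c : {poly rat}) (i j x y : int) :
  Defs.rel p n c i j x y = gen (c * (p ^ n)%:R) i j x y
    + \sum_(1 <= t < p ^ n) gen (c * acoef p n t) i (j - t%:Z) x y.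
Proof.
have pn_gt0 : (0 < p ^ n)%N by rewrite expn_gt0 prime_gt0.
rewrite /Defs.rel.
rewrite -(big_mkord xpredT (fun t => gen (c * acoef p n t) i (j - t%:Z) x y)) big_ltn //.
by rewrite /acoef bin1 expr0 scaler_nat subr0.
Qed.

End TensorZero.

Lemma mul_predn_lt_expn (p v : nat) : (1 < p)%N -> (v * p.-1 < p ^ v)%N.
Proof.
move=> p_gt1; elim: v => [|v IH]; first by rewrite expn0.
have: (0 < p ^ v)%N by rewrite expn_gt0 ltnW.
rewrite mulSn expnS; case: p p_gt1 IH => [|[|q]] //= _; nia.
Qed.

Lemma logn_mul_predn_lt (p s : nat) : prime p -> (0 < s)%N -> (logn p s * p.-1 < s)%N.
Proof.
move=> p_prime s_gt0; apply: leq_trans (mul_predn_lt_expn _ (prime_gt1 p_prime)) _.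
exact: dvdn_leq s_gt0 (pfactor_dvdnn p s).
Qed.

(* From s binom(p^n, s) = p^n binom(p^n - 1, s - 1), writing s = j p^(v_p(s)). *)
Lemma binomial_expn_factor (p n s : nat) : prime p -> (0 < s)%N ->
  exists2 u : rat, zloc p u & 'C(p ^ n, s)%:R * (p ^ logn p s)%:R = u * (p ^ n)%:R.
Proof.
move=> p_prime s_gt0; have [j cop_pj s_eq] := pfactor_coprime p_prime s_gt0.
have j_gt0 : (0 < j)%N by move: s_eq s_gt0 => ->; rewrite muln_gt0 => /andP [].
set B := 'C((p ^ n).-1, s.-1).
exists (B%:R / j%:R); first by apply: (@zloc_frac p B j); rewrite -prime_coprime.
have diag : (p ^ n * B = s * 'C(p ^ n, s))%N by rewrite mul_bin_diag prednK.
apply: (@mulIf _ j%:R); first by rewrite pnatr_eq0 -lt0n.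
rewrite [RHS]mulrAC divfK ?pnatr_eq0 -?lt0n // -!natrM; congr _%:R.
by rewrite -mulnA [(_ * j)%N]mulnC -s_eq mulnC -diag mulnC.
Qed.

Lemma acoef_expn_factor (p n k t : nat) (d : {poly rat}) :
  prime p -> in_ku p d -> (logn p t.+1 <= k)%N ->
  exists2 d', in_ku p d' &
    d * (p ^ k)%:R * acoef p n t = d' * (p ^ (n + (k - logn p t.+1)))%:R.
Proof.
move=> p_prime d_ku v_le_k; set v := logn p t.+1 in v_le_k *.
have [u zu uE] := binomial_expn_factor n p_prime (ltn0Sn t).
exists (d * (u *: 'X^t)); first exact: in_kuMZX.
have scal : ('C(p ^ n, t.+1)%:R * (p ^ k)%:R : rat) = u * (p ^ (n + (k - v)))%:R.
  by rewrite -{1}(subnKC v_le_k) !expnD !natrM mulrA uE mulrA.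
transitivity (('C(p ^ n, t.+1)%:R * (p ^ k)%:R) *: (d * 'X^t)).
  by rewrite /acoef -!mul_polyC polyCM !polyC_natr; ring.
by rewrite scal -!mul_polyC polyCM polyC_natr; ring.
Qed.

Lemma tensor_zero_gen_expn (p n : nat) (a : int) (m k : nat) (d : {poly rat}) :
  prime p -> in_ku p d -> (m <= k.+1 * p.-1)%N ->
  tensor_zero p n (gen (d * (p ^ (n + k))%:R) a m%:Z).
Proof.
move=> p_prime; elim/ltn_ind: m k d => m IH k d d_ku m_le.
have [-> | m_gt0] := posnP m; first exact: tensor_zero_gen0.
have q_gt0 : (0 < p.-1)%N by rewrite -subn1 subn_gt0 prime_gt1.
have tail_0 : tensor_zero p n (fun x y =>
    \sum_(1 <= t < p ^ n) gen (d * (p ^ k)%:R * acoef p n t) a (m%:Z - t%:Z) x y).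
  apply: (@tensor_zero_sum p n nat) => t; rewrite mem_index_iota => /andP [t_gt0 _].
  have [m_le_t | t_lt_m] := leqP m t.
    by apply: tensor_zero_gen0; rewrite subr_le0 lez_nat.
  have v_lt := logn_mul_predn_lt p_prime (ltn0Sn t).
  have v_le_k : (logn p t.+1 <= k)%N.
    by rewrite -ltnS -(ltn_pmul2r q_gt0); lia.
  have [d' d'_ku dE] := acoef_expn_factor n p_prime d_ku v_le_k.
  rewrite dE subzn; last exact: ltnW.
  apply: (IH (m - t)%N _ (k - logn p t.+1)%N d' d'_ku).
    by rewrite ltn_subrL t_gt0.
  by rewrite -subSn // mulnBl; lia.
have rel_0 : tensor_zero p n (Defs.rel p n (d * (p ^ k)%:R) a m).
  by apply: tensor_zero_rel; apply: in_kuMn.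
apply: tensor_zero_ext (tensor_zeroB p_prime rel_0 tail_0) => x y.
by rewrite rel_lead_tail // -mulrA -natrM -expnD addnC addrK.
Qed.

Theorem lemma4p1 (p n k : nat) (a b : int) :
  prime p -> (1 <= n)%N ->
  1 <= b <= ((k.+1 * (p.-1))%N)%:Z ->
  tensor_zero p n (gen ((p ^ (n + k))%:R) a b).
Proof.
move=> p_prime _ /andP [b_ge1 b_le]; case: b b_ge1 b_le => [m|m] //= _ m_le.
by rewrite -[_%:R]mul1r; apply: tensor_zero_gen_expn (in_ku1 p_prime) _.
Qed.
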